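(* The following structures have oligomorphic approximation: (i) every countable homogeneous oligomorphic structure $\mathbb{A}$ for which there is a family $\mathscr{B}$ of finite substructures of $\mathbb{A}$ such that every finite substructure of $\mathbb{A}$ is a substructure of some member of $\mathscr{B}$ and every member of $\mathscr{B}$ is homogeneous; (ii) the equality atoms; (iii) the vector atoms over any finite field $\mathsf{k}$; (iv) the Rado atoms.
   Context: A structure is a set with interpretations of relation symbols of a vocabulary; embeddings preserve and reflect relations and are injective; a substructure is the restriction to a subset. A structure $\mathbb{A}$ is homogeneous if every isomorphism between finite substructures of $\mathbb{A}$ extends to an automorphism of $\mathbb{A}$; oligomorphic if $\operatorname{Aut}(\mathbb{A})$ has finitely many orbits on $\mathbb{A}^d$ for every $d\ge1$. A homogeneous structure $\mathbb{A}$ has oligomorphic approximation if for every $d\ge1$ there is a family $\mathscr{B}$ of finite substructures of $\mathbb{A}$ such that (1) every finite substructure of $\mathbb{A}$ is a substructure of some $\mathbb{B}\in\mathscr{B}$, and (2) there is a finite bound, uniform over $\mathbb{B}\in\mathscr{B}$, on the number of orbits of $\operatorname{Aut}(\mathbb{B})$ on $\mathbb{B}^d$. Equality atoms: $\mathbb{N}$ with no relations besides equality. Vector atoms over a finite field $\mathsf{k}$: the countably-infinite-dimensional $\mathsf{k}$-vector space, with, for every $d$ and $\lambda_1,\dots,\lambda_d\in\mathsf{k}$, the $d$-ary relation $\lambda_1a_1+\dots+\lambda_da_d=0$ (so automorphisms are the linear bijections). Rado atoms: the Rado graph (the Fraïssé limit of all finite undirected graphs, i.e. the unique countable homogeneous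 graph into which every finite graph embeds), over a single symmetric irreflexive binary edge relation. *)

From Stdlib Require Import List.
From mathcomp Require Import all_boot all_order all_algebra.
Set Implicit Arguments. Unset Strict Implicit. Unset Printing Implicit Defensive.
Import GRing.Theory.

Record signature := Signature { sym : Type ; arity : sym -> nat }.

Record structure (L : signature) := Structure {
  carrier :> Type ;
  rel : forall s : sym L, ('I_(arity s) -> carrier) -> Prop }.
Arguments Structure {L} carrier rel.
Arguments rel {L} _ s _.

Definition is_embedding L (A B : structure L) (f : A -> B) : Prop :=
  injective f /\
  forall (s : sym L) (t : 'I_(arity s) -> A), rel A s t <-> rel B s (fun i => f (t i)).

Definition is_isomorphism L (A B : structure L) (f : A -> B) : Prop :=
  is_embedding f /\ bijective f.

Definition is_automorphism L (A : structure L) (g : A -> A) : Prop :=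
  is_isomorphism g.

Definition induced L (A : structure L) (P : A -> Prop) : structure L :=
  Structure {x : A | P x} (fun s t => rel A s (fun i => proj1_sig (t i))).
Arguments induced {L} A P.

Definition finite_subset (T : Type) (P : T -> Prop) : Prop :=
  exists s : list T, forall x, P x -> In x s.

Definition included (T : Type) (P Q : T -> Prop) : Prop := forall x, P x -> Q x.

(* countable = at most countable *)
Definition countable (T : Type) : Prop := exists f : T -> nat, injective f.

Definition homogeneous L (A : structure L) : Prop :=
  forall P Q : A -> Prop, finite_subset P -> finite_subset Q ->
  forall f : induced A P -> induced A Q, is_isomorphism f ->
  exists g : A -> A, is_automorphism g /\
    forall x : induced A P, g (proj1_sig x) = proj1_sig (f x).

Definition orbits_at_most L (A : structure L) (d N : nat) : Prop :=
  exists reps : list ('I_d -> A), (length reps <= N)%N /\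
    forall x : 'I_d -> A, exists r, In r reps /\
      exists g : A -> A, is_automorphism g /\ forall i, x i = g (r i).
Arguments orbits_at_most {L} A d N.

Definition oligomorphic L (A : structure L) : Prop :=
  forall d : nat, (1 <= d)%N -> exists N, orbits_at_most A d N.

Definition has_oligomorphic_approximation L (A : structure L) : Prop :=
  forall d : nat, (1 <= d)%N ->
  exists Bfam : (A -> Prop) -> Prop,
    (forall B, Bfam B -> finite_subset B) /\
    (forall C, finite_subset C -> exists B, Bfam B /\ included C B) /\
    exists N, forall B, Bfam B -> orbits_at_most (induced A B) d N.

Definition eq_sig : signature := @Signature Empty_set (fun _ => 0%N).
Definition equality_atoms : structure eq_sig :=
  @Structure eq_sig (nat : Type)
    (fun s : sym eq_sig => Empty_set_rect (fun s : Empty_set => ('I_(@arity eq_sig s) -> nat) -> Prop) s).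

(* Vector atoms over a finite field F: the countably-infinite-dimensional
   F-vector space (modelled as {poly F}, basis 'X^i), with a d-ary relation
   lambda_1 a_1 + ... + lambda_d a_d = 0 for every d and lambda in F^d. *)
Definition vec_sig (F : finFieldType) : signature :=
  @Signature {d : nat & 'I_d -> F} (fun s => projT1 s).
Definition vector_atoms (F : finFieldType) : structure (vec_sig F) :=
  @Structure (vec_sig F) ({poly F} : Type)
    (fun (s : {d : nat & 'I_d -> F}) (t : 'I_(projT1 s) -> {poly F}) => (\sum_(i < projT1 s) projT2 s i *: t i = 0)%R).

Definition graph_sig : signature := @Signature unit (fun _ => 2%N).
Definition graph_structure (V : Type) (E : V -> V -> Prop) : structure graph_sig :=
  @Structure graph_sig V (fun _ (t : 'I_2 -> V) => E (t (@ord0 1)) (t (@ord_max 1))).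

Definition is_rado_graph (V : Type) (E : V -> V -> Prop) : Prop :=
  (forall x y, E x y -> E y x) /\ (forall x, ~ E x x) /\
  countable V /\ homogeneous (graph_structure E) /\
  forall (n : nat) (e : 'I_n -> 'I_n -> Prop),
    (forall x y, e x y -> e y x) -> (forall x, ~ e x x) ->
    exists f : 'I_n -> V, is_embedding (A := graph_structure e) (B := graph_structure E) f.

From Pilot Require Import Defs.
From Stdlib Require Import List ClassicalEpsilon ProofIrrelevance FunctionalExtensionality.
From mathcomp Require Import all_boot all_order all_algebra.
Set Implicit Arguments. Unset Strict Implicit. Unset Printing Implicit Defensive.
Import GRing.Theory.

(* Each approximating family below consists of finite substructures whose
   automorphism groups have a bounded number of orbits on d-tuples.
   (i) Two d-tuples of a homogeneous substructure B lying in one Aut(A)-orbit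
   have the same quantifier-free type, hence lie in one Aut(B)-orbit.
   (ii) A permutation of {0, ..., n-1} moves any d-tuple into {0, ..., d-1}.
   (iii) An invertible linear map of the polynomials of size at most n moves
   any d-tuple into the span of 1, ..., X^(d-1).
   (iv) Let S_n be the graph on pairs (u, w) of vectors of F_2^n with (u, w)
   adjacent to (u', w') when u.w' + u'.w = 1. Every finite graph with at most
   n vertices embeds into S_n, and S_n embeds into the Rado graph, so by
   homogeneity copies of S_n cover every finite set of vertices. The maps
   (u, w) |-> (uP, wQ) with P Q^T = 1 are automorphisms of S_n, and they move
   every d-tuple into the tuples of a fixed shape indexed by three d x d
   matrices once n = 2d + t. *)

Lemma InP (T : eqType) (x : T) (s : seq T) : reflect (In x s) (x \in s).
Proof.
elim: s => [|y s IH] /=; first by constructor.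
rewrite in_cons; apply: (iffP orP) => [[/eqP->|/IH]|[->|/IH]]; auto.
Qed.

Lemma sval_inj (T : Type) (P : T -> Prop) : injective (@proj1_sig T P).
Proof. by move=> [x px] [y py] /= Exy; apply: subset_eq_compat. Qed.

Definition range (T U : Type) (f : T -> U) : U -> Prop := fun u => exists t, u = f t.

Lemma finite_range (T : finType) (U : Type) (f : T -> U) : finite_subset (range f).
Proof.
by exists (List.map f (enum T)) => _ [t ->]; apply: in_map; apply/InP; rewrite mem_enum.
Qed.

Lemma finite_range_sig (T U : Type) (P : T -> Prop) (f : {x | P x} -> U) :
  finite_subset P -> finite_subset (range f).
Proof.
move=> [s Ps]; pose f' x := if excluded_middle_informative (P x) is left Px
                           then Some (f (exist P x Px)) else None.
exists (List.flat_map (fun x => if f' x is Some u then [:: u] else [::]) s).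
move=> _ [[x Px] ->]; apply/in_flat_map; exists x; split; first exact: Ps.
rewrite /f'; case: excluded_middle_informative => // Px' /=.
by left; congr f; apply: sval_inj.
Qed.

Section Embeddings.
Variable L : signature.
Implicit Types A B C : structure L.

Lemma embedding_comp A B C (f : A -> B) (g : B -> C) :
  is_embedding f -> is_embedding g -> is_embedding (fun a => g (f a)).
Proof.
move=> [fi fr] [gi gr]; split; first by move=> x y /gi /fi.
by move=> s t; rewrite (fr s t); exact: (gr s (fun i => f (t i))).
Qed.

Lemma isomorphism_comp A B C (f : A -> B) (g : B -> C) :
  is_isomorphism f -> is_isomorphism g -> is_isomorphism (fun a => g (f a)).
Proof.
move=> [fe fb] [ge gb]; split; first exact: embedding_comp.
exact: (bij_comp gb fb).
Qed.

Lemma isomorphism_inv A B (f : A -> B) (g : B -> A) :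
  is_isomorphism f -> cancel f g -> cancel g f -> is_isomorphism g.
Proof.
move=> [[_ fr] _] fK gK; split; last by exists f.
split=> [|s t]; first exact: can_inj gK.
rewrite (fr s (fun i => g (t i))).
by have -> : (fun i => f (g (t i))) = t by apply: functional_extensionality => i.
Qed.

Lemma sval_embedding A (P : A -> Prop) : is_embedding (@proj1_sig A P : induced A P -> A).
Proof. by split=> //; exact: sval_inj. Qed.

Definition corestriction A B (f : A -> B) (a : A) : induced B (range f) :=
  exist (range f) (f a) (ex_intro _ a erefl).

Lemma corestriction_isomorphism A B (f : A -> B) :
  is_embedding f -> is_isomorphism (corestriction f).
Proof.
move=> [fi fr].
pose g (b : induced B (range f)) := proj1_sig (constructive_indefinite_description _ (proj2_sig b)).
have gE b : proj1_sig b = f (g b).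
  by rewrite /g; case: constructive_indefinite_description.
have gK : cancel (corestriction f) g by move=> a; apply: fi; rewrite -gE.
have fK : cancel g (corestriction f) by move=> b; apply: sval_inj; rewrite /= -gE.
split; last by exists g.
by split=> //; exact: can_inj gK.
Qed.

Definition same_qftype A B d (x : 'I_d -> A) (y : 'I_d -> B) : Prop :=
  (forall i j, x i = x j <-> y i = y j) /\
  forall s (c : 'I_(arity s) -> 'I_d),
    Defs.rel A s (fun k => x (c k)) <-> Defs.rel B s (fun k => y (c k)).

Lemma same_qftype_sym A B d (x : 'I_d -> A) (y : 'I_d -> B) :
  same_qftype x y -> same_qftype y x.
Proof. by move=> [eqxy relxy]; split=> [i j|s c]; apply: iff_sym. Qed.

Lemma same_qftype_trans A B C d (x : 'I_d -> A) (y : 'I_d -> B) (z : 'I_d -> C) :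
  same_qftype x y -> same_qftype y z -> same_qftype x z.
Proof.
move=> [eqxy relxy] [eqyz relyz].
by split=> [i j|s c]; [exact: iff_trans (eqyz i j) | exact: iff_trans (relyz s c)].
Qed.

Lemma same_qftype_embedding A B d (f : A -> B) (x : 'I_d -> A) (y : 'I_d -> B) :
  is_embedding f -> (forall i, y i = f (x i)) -> same_qftype x y.
Proof.
move=> [fi fr] yE; split=> [i j|s c]; first by rewrite !yE; split=> [->|/fi].
have -> : (fun k => y (c k)) = (fun k => f (x (c k))) by apply: functional_extensionality.
exact: fr.
Qed.

Lemma homogeneous_extend_embedding A (P : A -> Prop) (f : induced A P -> A) :
  homogeneous A -> finite_subset P -> is_embedding f ->
  exists g, is_automorphism g /\ forall a, g (proj1_sig a) = f a.
Proof.
move=> homA finP femb.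
exact: homA P (range f) finP (finite_range_sig f finP) _ (corestriction_isomorphism femb).
Qed.

Lemma homogeneous_same_qftype A d (x y : 'I_d -> A) :
  homogeneous A -> same_qftype x y -> exists g, is_automorphism g /\ forall i, x i = g (y i).
Proof.
move=> homA [eqxy relxy].
pose idx (b : induced A (range y)) :=
  proj1_sig (constructive_indefinite_description _ (proj2_sig b)).
have idxE b : proj1_sig b = y (idx b).
  by rewrite /idx; case: constructive_indefinite_description.
pose f b := x (idx b).
have femb : is_embedding f.
  split=> [b b' /eqxy Eyy|s t]; first by apply: sval_inj; rewrite !idxE.
  change (Defs.rel A s (fun i => proj1_sig (t i)) <-> Defs.rel A s (fun i => f (t i))).
  have -> : (fun i => proj1_sig (t i)) = (fun i => y (idx (t i))).
    by apply: functional_extensionality => i; rewrite -idxE.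
  exact: iff_sym (relxy s (fun i => idx (t i))).
have finy : finite_subset (range y) by apply: (finite_range y).
have [g [gaut gE]] := homogeneous_extend_embedding homA finy femb.
exists g; split=> // i; rewrite (gE (exist _ (y i) (ex_intro _ i erefl))).
by apply/eqxy; rewrite -idxE.
Qed.
End Embeddings.

Section Orbits.
Variables (L : signature) (B : structure L) (d : nat).

Lemma orbits_at_most_card (T : finType) (rep : T -> 'I_d -> B) :
  (forall x : 'I_d -> B, exists t g, is_automorphism g /\ forall i, x i = g (rep t i)) ->
  orbits_at_most B d #|T|.
Proof.
move=> repP; exists (List.map rep (enum T)); split.
  rewrite length_map cardE.
  by have -> : forall s : seq T, length s = size s by elim=> //= ? ? ->.
move=> x; have [t [g xE]] := repP x; exists (rep t); split; last by exists g.
by apply: in_map; apply/InP; rewrite mem_enum.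
Qed.

Lemma orbits_at_most_classes N (cls : ('I_d -> B) -> nat -> Prop) :
  (forall x, exists2 j, (j < N)%N & cls x j) ->
  (forall x y j, cls x j -> cls y j ->
     exists g, is_automorphism g /\ forall i, x i = g (y i)) ->
  orbits_at_most B d N.
Proof.
move=> clsP cls_orbit.
have [[x0 _]|no_tuple] := classic (exists x0 : 'I_d -> B, True); last first.
  by exists nil; split=> // x; case: no_tuple; exists x.
pose rep (j : 'I_N) := epsilon (inhabits x0) (fun x => cls x j).
rewrite -[N]card_ord; apply: (orbits_at_most_card (rep := rep)) => x.
have [j jN clsj] := clsP x.
have rep_cls : cls (rep (Ordinal jN)) j.
  by apply: (epsilon_spec (inhabits x0) (fun x => cls x j)); exists x.
have [g xE] := cls_orbit _ _ _ clsj rep_cls.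
by exists (Ordinal jN), g.
Qed.
End Orbits.

Lemma orbits_at_most_iso L (A B : structure L) (f : A -> B) d N :
  is_isomorphism f -> orbits_at_most A d N -> orbits_at_most B d N.
Proof.
move=> fiso [reps [lenN repsP]].
have [f' fK f'K] := proj2 fiso.
have f'iso := isomorphism_inv fiso fK f'K.
exists (List.map (fun r i => f (r i)) reps); split; first by rewrite length_map.
move=> x; have [r [inr [g [gaut xE]]]] := repsP (fun i => f' (x i)).
exists (fun i => f (r i)); split; first exact: (in_map (fun r i => f (r i))).
exists (fun b => f (g (f' b))); split.
  exact: isomorphism_comp (isomorphism_comp f'iso gaut) fiso.
by move=> i; rewrite fK -xE f'K.
Qed.

Lemma orbits_at_most_homogeneous_sub L (A : structure L) (B : A -> Prop) d N :
  homogeneous (induced A B) -> orbits_at_most A d N -> orbits_at_most (induced A B) d N.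
Proof.
move=> homB [reps [lenN repsP]].
pose cls (x : 'I_d -> induced A B) j := exists2 r, nth_error reps j = Some r &
  exists g, is_automorphism g /\ forall i, proj1_sig (x i) = g (r i).
apply: (orbits_at_most_classes (cls := cls)) => [x|x y j [r rj [g [gaut xE]]]].
  have [r [inr [g [gaut xE]]]] := repsP (fun i => proj1_sig (x i)).
  have [j rj] := In_nth_error _ _ inr.
  exists j; last by exists r => //; exists g.
  by apply: leq_trans lenN; apply/ltP/nth_error_Some; rewrite rj.
move=> [r' r'j [h [haut yE]]]; move: r'j yE; rewrite rj => -[<-] yE.
apply: homogeneous_same_qftype => //.
have qf_val (z : 'I_d -> induced A B) : same_qftype z (fun i => proj1_sig (z i)).
  exact: same_qftype_embedding (sval_embedding B) _.
apply: same_qftype_trans (qf_val x) _; apply: same_qftype_sym.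
apply: same_qftype_trans (qf_val y) _; apply: same_qftype_sym.
apply: same_qftype_trans (same_qftype_sym (same_qftype_embedding (proj1 gaut) xE)) _.
exact: same_qftype_embedding (proj1 haut) yE.
Qed.

Theorem oligomorphic_approximation_of_homogeneous_cover L (A : structure L)
    (Bfam : (A -> Prop) -> Prop) :
  oligomorphic A ->
  (forall B, Bfam B -> finite_subset B) ->
  (forall C, finite_subset C -> exists B, Bfam B /\ included C B) ->
  (forall B, Bfam B -> homogeneous (induced A B)) ->
  has_oligomorphic_approximation A.
Proof.
move=> oligA finB coverB homB d d_gt0; exists Bfam; do 2!split=> //.
have [N orbA] := oligA d d_gt0.
by exists N => B BB; apply: orbits_at_most_homogeneous_sub; [exact: homB|].
Qed.

Definition below (n : nat) : nat -> Prop := fun x => (x < n)%N.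

Lemma equality_atoms_automorphism (P : nat -> Prop) (g h : induced equality_atoms P -> _) :
  cancel g h -> cancel h g -> is_automorphism g.
Proof. by move=> gK hK; split; [split; [exact: can_inj gK | case] | exists h]. Qed.

Section PermutationBelow.
Variables (n : nat) (s : seq nat).
Hypothesis s_perm : perm_eq s (iota 0 n).

Let s_uniq : uniq s. Proof. by rewrite (perm_uniq s_perm) iota_uniq. Qed.
Let mem_s y : (y \in s) = (y < n)%N. Proof. by rewrite (perm_mem s_perm) mem_iota. Qed.
Let size_s : size s = n. Proof. by rewrite (perm_size s_perm) size_iota. Qed.

Lemma nth_perm_below y : (y < n)%N -> (nth 0 s y < n)%N.
Proof. by move=> yn; rewrite -mem_s mem_nth // size_s. Qed.

Lemma index_perm_below y : (y < n)%N -> (index y s < n)%N.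
Proof. by move=> yn; rewrite -size_s index_mem mem_s. Qed.

Definition nth_below (x : induced equality_atoms (below n)) : induced equality_atoms (below n) :=
  exist (below n) _ (nth_perm_below (proj2_sig x)).

Definition index_below (x : induced equality_atoms (below n)) : induced equality_atoms (below n) :=
  exist (below n) _ (index_perm_below (proj2_sig x)).

Lemma nth_below_automorphism : is_automorphism nth_below.
Proof.
apply: (@equality_atoms_automorphism _ _ index_below) => -[y yn]; apply: sval_inj => /=.
  by rewrite index_uniq ?size_s.
by rewrite nth_index ?mem_s.
Qed.
End PermutationBelow.

Lemma orbits_at_most_below d k :
  orbits_at_most (induced equality_atoms (below (d + k))) d #|{ffun 'I_d -> 'I_d}|.
Proof.
have rep_below (t : {ffun 'I_d -> 'I_d}) i : below (d + k) (t i).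
  by rewrite /below (leq_trans (ltn_ord _)) ?leq_addr.
pose rep t i : induced equality_atoms (below (d + k)) := exist _ _ (rep_below t i).
apply: (orbits_at_most_card (rep := rep)) => x.
pose vals := undup [seq proj1_sig (x i) | i <- enum 'I_d].
pose s := vals ++ [seq y <- iota 0 (d + k) | y \notin vals].
have vals_x i : proj1_sig (x i) \in vals.
  by rewrite mem_undup; apply/mapP; exists i; rewrite ?mem_enum.
have s_perm : perm_eq s (iota 0 (d + k)).
  apply: uniq_perm; rewrite ?iota_uniq //.
    rewrite cat_uniq undup_uniq filter_uniq ?iota_uniq // andbT.
    by apply/hasPn => y; rewrite mem_filter => /andP [].
  move=> y; rewrite mem_cat mem_filter mem_iota add0n.
  case vy: (y \in vals); last by rewrite andbC.
  by move: vy; rewrite mem_undup => /mapP [i _ ->]; case: (x i).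
have index_lt i : (index (proj1_sig (x i)) s < d)%N.
  rewrite index_cat vals_x (@leq_trans (size vals)) ?index_mem //.
  by rewrite (leq_trans (size_undup _)) // size_map size_enum_ord.
exists [ffun i => Ordinal (index_lt i)], (nth_below s_perm); split.
  exact: nth_below_automorphism.
by move=> i; apply: sval_inj; rewrite /= ffunE nth_index // mem_cat vals_x.
Qed.

Theorem equality_atoms_oligomorphic_approximation : has_oligomorphic_approximation equality_atoms.
Proof.
move=> d _; exists (fun B => exists k, B = below (d + k)); split; [|split].
- by move=> B [k ->]; exists (iota 0 (d + k)) => x xn; apply/InP; rewrite mem_iota.
- move=> C [s Cs]; exists (below (d + (\max_(x <- s) x).+1)); split; first by eexists.
  move=> x /Cs /InP xs; rewrite /below addnS ltnS (leq_trans _ (leq_addl _ _)) //.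
  exact: (@leq_bigmax_seq _ s xpredT id).
- by exists #|{ffun 'I_d -> 'I_d}| => B [k ->]; exact: orbits_at_most_below.
Qed.

Local Open Scope ring_scope.

Lemma mulmx_inv_row_ebase (K : fieldType) d k (A : 'M[K]_(d, d + k)) :
  A *m invmx (row_ebase A) = row_mx (lsubmx (A *m invmx (row_ebase A))) 0.
Proof.
rewrite -[LHS]hsubmxK; congr row_mx.
rewrite -{1}(mulmx_ebase A) mulmxK ?row_ebase_unit // -mulmx_rsub.
have -> : rsubmx (pid_mx (\rank A) : 'M[K]_(d, d + k)) = 0.
  apply/matrixP => i j; rewrite !mxE /=.
  have : (i < d + j)%N by rewrite (leq_trans (ltn_ord i)) // leq_addr.
  by rewrite ltn_neqAle => /andP [/negbTE ->].
by rewrite mulmx0.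
Qed.

Section BoundedSize.
Variables (F : finFieldType) (n : nat).

Definition bounded_size : {poly F} -> Prop := fun p => (size p <= n)%N.
Local Notation V := (induced (vector_atoms F) bounded_size).

Definition lin_map (G : 'M[F]_n) (x : V) : V :=
  exist bounded_size (rVpoly (poly_rV (proj1_sig x) *m G)) (size_poly _ _).

Lemma lin_mapK G H : G *m H = 1%:M -> cancel (lin_map G) (lin_map H).
Proof.
move=> GH x; apply: sval_inj => /=.
by rewrite rVpolyK -mulmxA GH mulmx1 poly_rV_K //; case: x.
Qed.

Lemma lin_map_automorphism G : G \in unitmx -> is_automorphism (lin_map G).
Proof.
move=> G_unit; have GK := lin_mapK (mulmxV G_unit); have GK' := lin_mapK (mulVmx G_unit).
split; last by exists (lin_map (invmx G)).
split=> [|s t /=]; first exact: can_inj GK.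
pose U i : 'rV[F]_n := poly_rV (proj1_sig (t i)).
pose u := \sum_(i < projT1 s) projT2 s i *: U i.
have tE i : proj1_sig (t i) = rVpoly (U i) by rewrite poly_rV_K //; case: (t i).
have -> : \sum_(i < projT1 s) projT2 s i *: proj1_sig (t i) = rVpoly u.
  by rewrite linear_sum; apply: eq_bigr => i _; rewrite linearZ /= -tE.
have -> : \sum_(i < projT1 s) projT2 s i *: proj1_sig (lin_map G (t i)) = rVpoly (u *m G).
  by rewrite mulmx_suml linear_sum; apply: eq_bigr => i _; rewrite -scalemxAl linearZ.
have rVpoly_eq0 (w : 'rV[F]_n) : rVpoly w = 0 <-> w = 0.
  by split=> [w0|->]; [rewrite -(rVpolyK w) w0 linear0 | rewrite linear0].
rewrite !rVpoly_eq0; split=> [->|uG0]; first by rewrite mul0mx.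
by rewrite -(mulmxK G_unit u) uG0 mul0mx.
Qed.
End BoundedSize.

Lemma orbits_at_most_bounded_size (F : finFieldType) d k :
  orbits_at_most (induced (vector_atoms F) (@bounded_size F (d + k))) d #|{: 'M[F]_(d, d)}|.
Proof.
pose rep (X : 'M[F]_(d, d)) i : induced (vector_atoms F) (@bounded_size F (d + k)) :=
  exist _ (rVpoly (row i (row_mx X (0 : 'M[F]_(d, k))))) (size_poly _ _).
apply: (orbits_at_most_card (rep := rep)) => x.
pose A : 'M[F]_(d, d + k) := \matrix_i poly_rV (proj1_sig (x i)).
exists (lsubmx (A *m invmx (row_ebase A))), (lin_map (row_ebase A)); split.
  exact/lin_map_automorphism/row_ebase_unit.
move=> i; apply: sval_inj => /=.
rewrite rVpolyK -mulmx_inv_row_ebase -row_mul mulmxKV ?row_ebase_unit // rowK poly_rV_K //.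
by case: (x i).
Qed.

Theorem vector_atoms_oligomorphic_approximation (F : finFieldType) :
  has_oligomorphic_approximation (vector_atoms F).
Proof.
move=> d _; exists (fun B => exists k, B = @bounded_size F (d + k)); split; [|split].
- move=> B [k ->]; exists (List.map (@rVpoly F (d + k)) (enum 'rV[F]_(d + k))) => p p_size.
  by rewrite -(poly_rV_K p_size); apply: in_map; apply/InP; rewrite mem_enum.
- move=> C [s Cs]; exists (@bounded_size F (d + \max_(p <- s) size p)); split; first by eexists.
  move=> p /Cs /InP ps; rewrite /bounded_size (leq_trans _ (leq_addl _ _)) //.
  exact: (@leq_bigmax_seq _ s xpredT (fun p : {poly F} => size p)).
- by exists #|{: 'M[F]_(d, d)}| => B [k ->]; exact: orbits_at_most_bounded_size.
Qed.

Section SymplecticGraph.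
Variable n : nat.
Local Notation K := 'F_2.

Definition dot (u v : 'rV[K]_n) : K := (u *m v^T) 0 0.
Definition symp_vertex : finType := ('rV[K]_n * 'rV[K]_n)%type.
Definition symp_adj (a b : symp_vertex) : Prop := dot a.1 b.2 + dot b.1 a.2 = 1.
Definition symp_graph := graph_structure symp_adj.

Lemma symp_adj_sym a b : symp_adj a b -> symp_adj b a.
Proof. by rewrite /symp_adj addrC. Qed.

Lemma symp_adj_irr a : ~ symp_adj a a.
Proof.
have addxx (x : K) : x + x = 0 by case: x => [[|[|]]] //= x2; apply: val_inj.
by rewrite /symp_adj addxx => /esym/eqP; rewrite oner_eq0.
Qed.

Definition symp_map (P Q : 'M[K]_n) (a : symp_vertex) : symp_vertex := (a.1 *m P, a.2 *m Q).

Lemma dot_map P Q u w : P *m Q^T = 1%:M -> dot (u *m P) (w *m Q) = dot u w.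
Proof. by move=> PQ; rewrite /dot trmx_mul !mulmxA -(mulmxA u P) PQ mulmx1. Qed.

Lemma symp_map_automorphism P Q :
  P *m Q^T = 1%:M -> is_automorphism (symp_map P Q : symp_graph -> symp_graph).
Proof.
move=> PQ.
have QP : Q^T *m P = 1%:M by apply: mulmx1C.
have QP' : Q *m P^T = 1%:M by rewrite -[Q]trmxK -trmx_mul PQ trmx1.
have PQ' : P^T *m Q = 1%:M by rewrite -[Q]trmxK -trmx_mul QP trmx1.
have PQK : cancel (symp_map P Q) (symp_map Q^T P^T).
  by case=> a b; rewrite /symp_map /= -!mulmxA PQ QP' !mulmx1.
have QPK : cancel (symp_map Q^T P^T) (symp_map P Q).
  by case=> a b; rewrite /symp_map /= -!mulmxA QP PQ' !mulmx1.
split; last by exists (symp_map Q^T P^T).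
split=> [|s u /=]; first exact: can_inj PQK.
by rewrite /symp_adj /symp_map /= !dot_map.
Qed.
End SymplecticGraph.

Section SymplecticOrbits.
Variables d t : nat.
Local Notation n := (d + (d + t))%N.
Local Notation K := 'F_2.
Local Notation triple := ('M[K]_(d, d) * 'M[K]_(d, d) * 'M[K]_(d, d))%type.

Definition symp_rep (tau : triple) (i : 'I_d) : symp_vertex n :=
  (row i (row_mx tau.1.1 (row_mx tau.1.2 (0 : 'M[K]_(d, t)))),
   row i (row_mx tau.2 (0 : 'M[K]_(d, d + t)))).

(* First an invertible column operation pushes the second components into the
   first d coordinates, the first components being transformed by its inverse
   transpose; then a block operation fixing the first d coordinates pushes the
   last d + t coordinates of the first components into d coordinates. *)
Lemma symp_move_to_rep (x : 'I_d -> symp_vertex n) :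
  exists tau P Q, P *m Q^T = 1%:M /\ forall i, x i = symp_map P Q (symp_rep tau i).
Proof.
pose A : 'M[K]_(d, n) := \matrix_i (x i).1.
pose W : 'M[K]_(d, n) := \matrix_i (x i).2.
pose E1 := row_ebase W; pose H1 := invmx E1; pose G1 := E1^T.
pose A' := A *m G1; pose A1 := lsubmx A'; pose A2 := rsubmx A'.
pose E2 := row_ebase A2.
pose G2 : 'M[K]_n := block_mx 1%:M 0 0 (invmx E2).
pose H2 : 'M[K]_n := block_mx 1%:M 0 0 E2^T.
pose G := G1 *m G2; pose H := H1 *m H2.
have E1_unit : E1 \in unitmx by apply: row_ebase_unit.
have E2_unit : E2 \in unitmx by apply: row_ebase_unit.
have GH1 : G1 *m H1^T = 1%:M by rewrite /G1 /H1 -trmx_mul mulVmx // trmx1.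
have GH2 : G2 *m H2^T = 1%:M.
  rewrite /G2 /H2 tr_block_mx !trmx0 trmx1 trmxK mulmx_block.
  by rewrite ?mulmx0 ?mul0mx ?mulmx1 ?addr0 ?add0r mulVmx // -scalar_mx_block.
have GH : G *m H^T = 1%:M.
  by rewrite /G /H trmx_mul !mulmxA -(mulmxA G1) GH2 mulmx1 GH1.
have HG : H *m G^T = 1%:M by rewrite -[H]trmxK -trmx_mul GH trmx1.
have AG : A *m G = row_mx A1 (row_mx (lsubmx (A2 *m invmx E2)) 0).
  rewrite /G mulmxA -/A' -[A']hsubmxK /G2 mul_row_block.
  by rewrite ?mulmx0 ?mul0mx ?mulmx1 ?addr0 ?add0r -mulmx_inv_row_ebase.
have WH : W *m H = row_mx (lsubmx (W *m H1)) 0.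
  rewrite /H mulmxA {1}/H1 mulmx_inv_row_ebase /H2 mul_row_block.
  by rewrite ?mulmx0 ?mul0mx ?mulmx1 ?addr0 ?add0r ?row_mxKl.
exists (A1, lsubmx (A2 *m invmx E2), lsubmx (W *m H1)), H^T, G^T; split.
  by rewrite trmxK; apply: mulmx1C.
move=> i; rewrite /symp_map /symp_rep /= -AG -WH -!row_mul -(mulmxA A) -(mulmxA W).
by rewrite GH HG !mulmx1 !rowK; case: (x i).
Qed.

Lemma orbits_at_most_symp_graph : orbits_at_most (symp_graph n) d #|{: triple}|.
Proof.
apply: (orbits_at_most_card (rep := symp_rep : triple -> 'I_d -> symp_graph n)) => x.
have [tau [P [Q [PQ xE]]]] := symp_move_to_rep x.
by exists tau, (symp_map P Q); split; first exact: symp_map_automorphism.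
Qed.
End SymplecticOrbits.

Definition bit (P : Prop) : 'F_2 := if excluded_middle_informative P then 1 else 0.

Lemma bit_eq1 P : bit P = 1 <-> P.
Proof. by rewrite /bit; case: excluded_middle_informative => // nP; split. Qed.

Section SymplecticUniversality.
Variables (V : Type) (E : V -> V -> Prop).
Hypotheses (E_sym : forall x y, E x y -> E y x) (E_irr : forall x, ~ E x x).
Variables (C : V -> Prop) (s : list V) (n : nat).
Hypotheses (C_s : forall x, C x -> In x s) (s_n : (length s <= n)%N).
Local Notation G := (induced (graph_structure E) C).

Definition vertex_index (c : G) : nat :=
  proj1_sig (constructive_indefinite_description _ (In_nth_error _ _ (C_s (proj2_sig c)))).

Lemma vertex_indexE c : nth_error s (vertex_index c) = Some (proj1_sig c).
Proof. by rewrite /vertex_index; case: constructive_indefinite_description. Qed.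

Lemma vertex_index_inj : injective vertex_index.
Proof.
move=> c c' cc'; apply: sval_inj.
by move: (vertex_indexE c); rewrite cc' vertex_indexE => -[].
Qed.

Lemma vertex_index_lt c : (vertex_index c < n)%N.
Proof. by apply: leq_trans s_n; apply/ltP/nth_error_Some; rewrite vertex_indexE. Qed.

Definition index_adj (i k : nat) : Prop :=
  exists u v, [/\ nth_error s i = Some u, nth_error s k = Some v & E u v].

Lemma index_adjE c c' :
  index_adj (vertex_index c) (vertex_index c') <-> E (proj1_sig c) (proj1_sig c').
Proof.
rewrite /index_adj !vertex_indexE.
by split=> [[u [v [[<-] [<-] uv]]] | cc'] //; exists (proj1_sig c), (proj1_sig c').
Qed.

Definition earlier_neighbours (i : nat) : 'rV['F_2]_n :=
  \row_k ((k < i)%N%:R * bit (index_adj i k)).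

(* The vertex number i becomes (e_i, w_i) where w_i marks the earlier
   neighbours of i, so that e_i.w_j + e_j.w_i is the bit of the edge {i, j}. *)
Definition symp_embedding (c : G) : symp_vertex n :=
  (delta_mx 0 (Ordinal (vertex_index_lt c)), earlier_neighbours (vertex_index c)).

Lemma dot_delta_mx (j : 'I_n) (w : 'rV['F_2]_n) : dot (delta_mx 0 j) w = w 0 j.
Proof. by rewrite /dot -rowE !mxE. Qed.

Lemma symp_embedding_embedding : is_embedding (A := G) (B := symp_graph n) symp_embedding.
Proof.
split=> [c c' /(congr1 fst) /= /matrixP /(_ 0 (Ordinal (vertex_index_lt c)))|sy u /=].
  rewrite !mxE eqxx /=.
  have [/(congr1 val) /vertex_index_inj //|_ /eqP] :=
    eqVneq (Ordinal (vertex_index_lt c)) (Ordinal (vertex_index_lt c')).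
  by rewrite eqxx oner_eq0.
rewrite /symp_adj /= !dot_delta_mx !mxE /=.
have [_|_|/vertex_index_inj ->] /= :=
  ltngtP (vertex_index (u ord0)) (vertex_index (u ord_max)).
- by rewrite mul1r mul0r addr0 bit_eq1 index_adjE; split; exact: E_sym.
- by rewrite mul1r mul0r add0r bit_eq1 index_adjE.
- by rewrite !mul0r addr0; split=> [/E_irr|/esym/eqP]; rewrite ?oner_eq0.
Qed.
End SymplecticUniversality.

Section RadoGraph.
Variables (V : Type) (E : V -> V -> Prop).
Hypothesis E_rado : is_rado_graph E.

Lemma rado_embeds_finite_graph (T : finType) (e : T -> T -> Prop) :
  (forall x y, e x y -> e y x) -> (forall x, ~ e x x) ->
  exists f : T -> V, is_embedding (A := graph_structure e) (B := graph_structure E) f.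
Proof.
move=> e_sym e_irr; have [_ [_ [_ [_ E_univ]]]] := E_rado.
pose e' (i j : 'I_#|T|) := e (enum_val i) (enum_val j).
have [f [f_inj f_rel]] := E_univ _ e' (fun i j => @e_sym _ _) (fun i => @e_irr _).
exists (fun a => f (enum_rank a)); split=> [a b /f_inj /enum_rank_inj //|sy u /=].
by have := f_rel sy (fun k => enum_rank (u k)); rewrite /= /e' !enum_rankK.
Qed.

Lemma rado_covered_by_symp_graphs d (C : V -> Prop) : finite_subset C ->
  exists t (f : symp_graph (d + (d + t)) -> graph_structure E),
    is_embedding f /\ included C (range f).
Proof.
move=> [s C_s]; have [E_sym [E_irr [_ [E_hom _]]]] := E_rado.
have s_n : (length s <= d + (d + length s))%N by rewrite addnA leq_addl.
have [f f_emb] := rado_embeds_finite_graph (@symp_adj_sym (d + (d + length s)))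
                                           (@symp_adj_irr _).
have F_emb := embedding_comp (symp_embedding_embedding E_sym E_irr C_s s_n) f_emb.
have [g [g_aut gE]] := homogeneous_extend_embedding E_hom (ex_intro _ s C_s) F_emb.
have [h gK hK] := proj2 g_aut.
exists (length s), (fun a => h (f a)); split.
  exact: embedding_comp f_emb (proj1 (isomorphism_inv g_aut gK hK)).
by move=> v Cv; exists (symp_embedding (E := E) C_s s_n (exist C v Cv)); rewrite /= -gE gK.
Qed.

Theorem rado_oligomorphic_approximation : has_oligomorphic_approximation (graph_structure E).
Proof.
move=> d _.
exists (fun B => exists t (f : symp_graph (d + (d + t)) -> graph_structure E),
                 is_embedding f /\ B = range f); split; [|split].
- by move=> B [t [f [_ ->]]]; exact: finite_range.
- move=> C /(rado_covered_by_symp_graphs d) [t [f [f_emb Cf]]].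
  by exists (range f); split=> //; exists t, f.
- exists #|{: 'M['F_2]_(d, d) * 'M['F_2]_(d, d) * 'M['F_2]_(d, d)}| => B [t [f [f_emb ->]]].
  exact: orbits_at_most_iso (corestriction_isomorphism f_emb) (orbits_at_most_symp_graph d t).
Qed.
End RadoGraph.

Local Close Scope ring_scope.

Theorem mainTheorem2 :
  (* (i) *)
  (forall (L : signature) (A : structure L),
     countable A -> homogeneous A -> oligomorphic A ->
     (exists Bfam : (A -> Prop) -> Prop,
        (forall B, Bfam B -> finite_subset B) /\
        (forall C, finite_subset C -> exists B, Bfam B /\ included C B) /\
        (forall B, Bfam B -> homogeneous (induced A B))) ->
     has_oligomorphic_approximation A) /\
  (* (ii) *)
  has_oligomorphic_approximation equality_atoms /\
  (* (iii) *)
  (forall F : finFieldType, has_oligomorphic_approximation (vector_atoms F)) /\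
  (* (iv) *)
  (forall (V : Type) (E : V -> V -> Prop),
     is_rado_graph E -> has_oligomorphic_approximation (graph_structure E)).
Proof.
split.
  move=> L A _ _ oligA [Bfam [finB [coverB homB]]].
  exact: oligomorphic_approximation_of_homogeneous_cover oligA finB coverB homB.
split; first exact: equality_atoms_oligomorphic_approximation.
split; first exact: vector_atoms_oligomorphic_approximation.
exact: rado_oligomorphic_approximation.
Qed.
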